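(* $(\mathbf{Z}/11\mathbf{Z})\rtimes_4\mathbf{Z}\not\simeq(\mathbf{Z}/11\mathbf{Z})\rtimes_9\mathbf{Z}$.
   Context: For $b\in(\mathbf{Z}/11\mathbf{Z})^*$, $(\mathbf{Z}/11\mathbf{Z})\rtimes_b\mathbf{Z}$ denotes the semidirect product in which the generator $1\in\mathbf{Z}$ acts on $\mathbf{Z}/11\mathbf{Z}$ by multiplication by $b$. *)

From HB Require Import structures.
From mathcomp Require Import all_boot all_order all_algebra.
Set Implicit Arguments. Unset Strict Implicit. Unset Printing Implicit Defensive.
Import Order.TTheory GRing.Theory Num.Theory.
Local Open Scope ring_scope.

Definition sdp11 := ('Z_11 * int)%type.

(* Multiplication of (Z/11Z) ⋊_b Z, where 1 ∈ Z acts on Z/11Z by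
   multiplication by b (so m ∈ Z acts by b^m):
   (a, m) * (c, n) = (a + b^m c, m + n). *)
Definition sdp_mul (b : 'Z_11) (x y : sdp11) : sdp11 :=
  (x.1 + b ^ x.2 * y.1, x.2 + y.2).

Definition sdp_isomorphic (b c : 'Z_11) : Prop :=
  exists f : sdp11 -> sdp11,
    bijective f /\ forall x y, f (sdp_mul b x y) = sdp_mul c (f x) (f y).

(** An isomorphism f from (Z/11Z) ⋊_b Z onto (Z/11Z) ⋊_c Z maps the torsion
    subgroup Z/11Z into itself, by multiplication by some v <> 0, and induces
    on the torsion-free quotient Z an automorphism, multiplication by m = ±1.
    Applying f to the defining relation t a t^-1 = b a gives c^m v = b v,
    hence b = c or b = c^-1; but neither 4 = 9 nor 4 * 9 = 1 holds mod 11. *)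
From mathcomp Require Import all_boot all_algebra.
Import GRing.Theory.

Set Implicit Arguments.
Unset Strict Implicit.
Local Open Scope ring_scope.

Section AdditiveMorphisms.

Variables (U V : zmodType) (phi : U -> V).
Hypothesis phiD : {morph phi : x y / x + y}.

Lemma morph_add0 : phi 0 = 0.
Proof. by apply: (@addrI _ (phi 0)); rewrite -phiD !addr0. Qed.

Lemma morph_addN x : phi (- x) = - phi x.
Proof. by apply: (@addrI _ (phi x)); rewrite -phiD !subrr morph_add0. Qed.

Lemma morph_addMn x n : phi (x *+ n) = phi x *+ n.
Proof. by elim: n => [|n IHn]; rewrite ?morph_add0 // !mulrS phiD IHn. Qed.

Lemma morph_addMz x k : phi (x *~ k) = phi x *~ k.
Proof. by case: k => n; rewrite ?NegzE ?mulrNz ?morph_addN morph_addMn. Qed.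

End AdditiveMorphisms.

Section SemidirectMul.

Variable b : 'Z_11.

Lemma sdp_mul_torsion a a' : sdp_mul b (a, 0%Z) (a', 0%Z) = (a + a', 0%Z).
Proof. by rewrite /sdp_mul expr0z mul1r addr0. Qed.

Lemma sdp_mul_shift k l : sdp_mul b (0, k) (0, l) = (0, k + l).
Proof. by rewrite /sdp_mul mulr0 addr0. Qed.

Lemma sdp_mul_pair a k : sdp_mul b (a, 0%Z) (0, k) = (a, k).
Proof. by rewrite /sdp_mul mulr0 addr0 add0r. Qed.

Lemma sdp_mul_idem x : sdp_mul b x x = x -> x = (0, 0%Z).
Proof.
case: x => a k [Ea Ek].
have k0 : k = 0%Z by apply: (@addrI _ k); rewrite Ek addr0.
rewrite k0 expr0z mul1r in Ea *.
by rewrite -[a in RHS]addr0 in Ea; rewrite (addrI _ Ea).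
Qed.

Lemma sdp_mul_conj a :
  sdp_mul b (0, 1%Z) (a, 0%Z) = sdp_mul b (b * a, 0%Z) (0, 1%Z).
Proof. by rewrite /sdp_mul /= expr1z expr0z mulr0 !addr0 add0r. Qed.

End SemidirectMul.

Section SemidirectHom.

Variables (b c : 'Z_11) (f : sdp11 -> sdp11).
Hypothesis fM : forall x y, f (sdp_mul b x y) = sdp_mul c (f x) (f y).

Lemma sdp_hom1 : f (0, 0%Z) = (0, 0%Z).
Proof. by apply: (@sdp_mul_idem c); rewrite -fM /sdp_mul /= mulr0 !addr0. Qed.

Lemma sdp_hom_snd_torsion a : (f (a, 0%Z)).2 = 0%Z.
Proof.
have phiD : {morph (fun a => (f (a, 0%Z)).2) : a a' / a + a'}.
  by move=> a1 a2; rewrite /= -(@sdp_mul_torsion b) fM.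
have : (f (a, 0%Z)).2 *+ 11 = 0.
  by rewrite -(morph_addMn phiD) -mulr_natr pchar_Zp // mulr0 (morph_add0 phiD).
by rewrite -mulr_natr => /eqP; rewrite mulf_eq0 orbF => /eqP.
Qed.

Lemma sdp_hom_torsion a : f (a, 0%Z) = (a * (f (1, 0%Z)).1, 0%Z).
Proof.
have fst_torsion a' : f (a', 0%Z) = ((f (a', 0%Z)).1, 0%Z).
  by case: (f (a', 0%Z)) (sdp_hom_snd_torsion a') => ? ? /= ->.
have phiD : {morph (fun a => (f (a, 0%Z)).1) : a a' / a + a'}.
  move=> a1 a2; rewrite /= -(@sdp_mul_torsion b) fM.
  by rewrite fst_torsion (fst_torsion a2) sdp_mul_torsion.
rewrite fst_torsion -[a in LHS]natr_Zp (morph_addMn phiD) -mulr_natl.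
by rewrite natr_Zp.
Qed.

Lemma sdp_hom_snd x : (f x).2 = (f (0, 1%Z)).2 * x.2.
Proof.
have phiD : {morph (fun k => (f (0, k)).2) : k l / k + l}.
  by move=> k l; rewrite /= -(@sdp_mul_shift b) fM.
case: x => a k /=; rewrite -(@sdp_mul_pair b) fM sdp_hom_torsion /= add0r.
by rewrite -[k in LHS]intz (morph_addMz phiD) -mulrzr intz.
Qed.

Lemma sdp_hom_conj : c ^ (f (0, 1%Z)).2 * (f (1, 0%Z)).1 = b * (f (1, 0%Z)).1.
Proof.
move/(congr1 f): (sdp_mul_conj b 1); rewrite !fM mulr1 (sdp_hom_torsion b).
rewrite (sdp_hom_torsion 1) mul1r; case: (f (0, 1%Z)) => u m.
rewrite /sdp_mul expr0z mul1r => /(congr1 fst) /=.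
by rewrite [in RHS]addrC => /addrI.
Qed.

End SemidirectHom.

Lemma sdp_isomorphic_eq (b c : 'Z_11) : sdp_isomorphic b c -> b = c \/ b = c^-1.
Proof.
move=> [f [[h fK hK] fM]].
set m := (f (0, 1%Z)).2; set v := (f (1, 0%Z)).1.
have m_unit : (m == 1) || (m == -1).
  apply: (@intUnitRing.unitzPl _ (h (0, 1%Z)).2).
  by rewrite mulrC -(sdp_hom_snd fM) hK.
have v_neq0 : v != 0.
  apply/eqP => v0; have := congr1 h (sdp_hom_torsion fM 1).
  by rewrite -/v v0 mul1r -(sdp_hom1 fM) !fK => /(congr1 fst)/eqP; rewrite oner_eq0.
(* ['Z_11] is convertible to the prime field ['F_11], where [v] cancels. *)
have := sdp_hom_conj fM; rewrite -/m -/v => /(@mulIf 'F_11 _ v_neq0) Ecb.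
by case/orP: m_unit => /eqP m1; rewrite m1 in Ecb; [left|right]; rewrite -Ecb.
Qed.

Theorem lemma4p3 : ~ sdp_isomorphic (4%:R : 'Z_11) (9%:R : 'Z_11).
Proof. by move/sdp_isomorphic_eq => [] /eqP; vm_compute. Qed.
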